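(* Let $d\ge 3$, $\lambda>0$, $\rho_0=o(1)$, $\mu=\rho_0/(d+\lambda)$. Let $a,b,c\ge0$ be a trajectory of the spectral gradient flow reduced dynamics \[ \dot a=-2\,\mathrm{sgn}(g_{w_\star})\sqrt a,\quad \dot b=-2\,\mathrm{sgn}(g_v)\sqrt b,\quad \dot c=-2\,\mathrm{sgn}(g_\perp)\sqrt c, \] with $a(0)=b(0)=c(0)=\mu$, where $r=a+(1+\lambda)b+(d-2)c$, $g_{w_\star}=4(r+2a-3)$, $g_v=4(1+\lambda)(r+2(1+\lambda)b-1)$, $g_\perp=4(r+2c-1)$, and $\mathrm{sgn}(0)=0$. Let $T_1'=\inf\{t\ge0: r(t)+2(1+\lambda)b(t)\ge1\}$ and $\alpha=\sqrt a$, $\beta=\sqrt b$, $\gamma=\sqrt c$. Then, for $d$ large enough, for all $t\in[0,T_1']$, \[ \alpha(t)=\beta(t)=\gamma(t)=\sqrt\mu+t,\quad\text{equivalently}\quad a(t)=b(t)=c(t)=(\sqrt\mu+t)^2, \] and $T_1'=\Theta((d+\lambda)^{-1/2})$.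
   Context: These ODEs describe the population spectral gradient flow $\dot W=-\mathrm{polar}(\nabla_W\mathcal L(W))$ for the phase-retrieval model $y=(x^\top w_\star)^2+\nu$, $x\sim\mathcal N(0,I_d+\lambda vv^\top)$ with $v\perp w_\star$ unit vectors, network $f_W(x)=\sum_{j=1}^d(w_j^\top x)^2$, in the coordinates $WW^\top=a\,w_\star w_\star^\top+b\,vv^\top+c(I-w_\star w_\star^\top-vv^\top)$; $\mathrm{polar}(A)=A(A^\top A)^{-1/2}$. *)

From HB Require Import structures.
From mathcomp Require Import all_boot all_order all_algebra.
From mathcomp Require Import all_classical all_reals all_analysis.
Set Implicit Arguments. Unset Strict Implicit. Unset Printing Implicit Defensive.
Import Order.TTheory GRing.Theory Num.Theory.
Import numFieldNormedType.Exports.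
Local Open Scope classical_set_scope.
Local Open Scope ring_scope.

Section Reduced.
Variable R : realType.
Variables (lam : R) (d : nat) (a b c : R -> R).

Definition rr (t : R) : R := a t + (1 + lam) * b t + (d%:R - 2) * c t.
Definition g_w (t : R) : R := 4 * (rr t + 2 * a t - 3).
Definition g_v (t : R) : R := 4 * (1 + lam) * (rr t + 2 * (1 + lam) * b t - 1).
Definition g_perp (t : R) : R := 4 * (rr t + 2 * c t - 1).

Definition T1set : set R := [set t | 0 <= t /\ 1 <= rr t + 2 * (1 + lam) * b t].

(* (a,b,c) is a nonnegative, continuous trajectory on [0,oo) starting at
   (mu,mu,mu) which solves the reduced spectral-gradient-flow ODE
   (with sgn = Num.sg, sgn 0 = 0) at every time t in (0, T1'), i.e. every
   t > 0 such that no s in [0,t] lies in T1set. *)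
Definition sgf_trajectory (mu : R) : Prop :=
  (forall t, 0 <= t -> 0 <= a t /\ 0 <= b t /\ 0 <= c t) /\
  a 0 = mu /\ b 0 = mu /\ c 0 = mu /\
  {within `[0, +oo[, continuous a} /\
  {within `[0, +oo[, continuous b} /\
  {within `[0, +oo[, continuous c} /\
  (forall t, 0 < t -> (forall s, 0 <= s <= t -> ~ T1set s) ->
     is_derive t 1 a (- 2 * Num.sg (g_w t) * Num.sqrt (a t)) /\
     is_derive t 1 b (- 2 * Num.sg (g_v t) * Num.sqrt (b t)) /\
     is_derive t 1 c (- 2 * Num.sg (g_perp t) * Num.sqrt (c t))).
End Reduced.

From HB Require Import structures.
From mathcomp Require Import all_boot all_order all_algebra.
From mathcomp Require Import all_classical all_reals all_analysis.
From mathcomp.algebra_tactics Require Import ring lra.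
Import Order.TTheory GRing.Theory Num.Theory.
Import numFieldNormedType.Exports.
Local Open Scope classical_set_scope.
Local Open Scope ring_scope.

(* While r + 2(1+lam) b < 1, all three signs are negative: g_v obviously, g_w
   because a <= r < 1, and g_perp as soon as c <= b.  So a and b solve
   x' = 2 sqrt x, i.e. sqrt a = sqrt b = sqrt mu + t, whereas c' <= 2 sqrt c
   always gives sqrt c <= sqrt mu + t = sqrt b; hence g_perp < 0 as well and
   sqrt c = sqrt mu + t.  Up to T1' the threshold quantity is therefore
   (d + 3 lam + 2) (sqrt mu + t)^2, and T1' is the time it reaches 1.  As
   (d + lam) mu = rho0 d is small and d + lam <= d + 3 lam + 2 <= 3 (d + lam),
   this time lies between 1/4 and 1 times (d + lam)^(-1/2). *)

Section SqrtComparison.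
Variable R : realType.
Implicit Types (f D : R -> R) (a b e x : R).

Lemma is_derive_sqrtD [f x e df] : is_derive x 1 f df -> 0 < f x + e ->
  is_derive x 1 (fun y => Num.sqrt (f y + e)) (df / (2 * Num.sqrt (f x + e))).
Proof.
move=> fdf fxe.
have fedf : is_derive x 1 (fun y => f y + e) (df + 0) by apply: is_deriveD.
have := @is_derive1_comp _ Num.sqrt _ x _ _ (is_derive1_sqrt fxe) fedf.
by rewrite addr0 mulrC.
Qed.

Lemma continuous_sqrtD e [a b f] : {within `[a, b], continuous f} ->
  {within `[a, b], continuous (fun y => Num.sqrt (f y + e))}.
Proof.
move=> cf; have cfe : {within `[a, b], continuous (fun y => f y + e)}.
  by apply: within_continuousD cf _; apply: continuous_subspaceT => ?; exact: cvg_cst.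
by apply: within_continuous_comp cfe => y _; exact: sqrt_continuous.
Qed.

Lemma sqrt_le_of_derive_le f D a b : a <= b ->
  {within `[a, b], continuous f} -> {in `[a, b], forall x, 0 <= f x} ->
  (forall x, x \in `]a, b[ -> is_derive x 1 f (D x)) ->
  (forall x, x \in `]a, b[ -> D x <= 2 * Num.sqrt (f x)) ->
  Num.sqrt (f b) <= Num.sqrt (f a) + (b - a).
Proof.
move=> + cf f_ge0 fD Dle; rewrite le_eqVlt => /predU1P[<-|ab].
  by rewrite subrr addr0.
(* sqrt (f + eps^2) is differentiable even where f vanishes; then eps -> 0. *)
apply/ler_addgt0Pr => eps eps0; set e := eps ^+ 2.
have fe_gt0 x : x \in `]a, b[ -> 0 < f x + e.
  move=> xab; rewrite ltr_wpDl ?exprn_gt0 //.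
  by apply: f_ge0; rewrite in_itv /= !ltW ?(itvP xab).
have [x xab MVTx] := MVT ab
  (fun x xab => is_derive_sqrtD (fD x xab) (fe_gt0 x xab)) (continuous_sqrtD e cf).
have slope_le1 : D x / (2 * Num.sqrt (f x + e)) <= 1.
  have sfe_gt0 : 0 < Num.sqrt (f x + e) by rewrite sqrtr_gt0 fe_gt0.
  rewrite ler_pdivrMr ?mul1r ?mulr_gt0 //; apply: (le_trans (Dle x xab)).
  by rewrite ler_pM2l // ler_sqrt ?lerDl ?sqr_ge0 // ltW // fe_gt0.
have fa_ge0 : 0 <= f a by apply: f_ge0; rewrite in_itv /= lexx ltW.
have fb_ge0 : 0 <= f b by apply: f_ge0; rewrite in_itv /= lexx ltW.
have sqrt_fae : Num.sqrt (f a + e) <= Num.sqrt (f a) + eps.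
  have rhs_ge0 : 0 <= Num.sqrt (f a) + eps by rewrite addr_ge0 ?sqrtr_ge0 ?ltW.
  rewrite -(ger0_norm rhs_ge0) -sqrtr_sqr ler_sqrt ?sqr_ge0 //.
  by rewrite sqrrD sqr_sqrtr // lerD2r lerDl mulrn_wge0 // mulr_ge0 ?sqrtr_ge0 ?ltW.
have sqrt_fbe : Num.sqrt (f b) <= Num.sqrt (f b + e).
  by rewrite ler_sqrt ?lerDl ?sqr_ge0 // addr_ge0 ?sqr_ge0.
have : Num.sqrt (f b + e) - Num.sqrt (f a + e) <= b - a.
  by rewrite MVTx ler_piMl // subr_ge0 ltW.
lra.
Qed.

Lemma sqrt_ge_of_derive_ge f D a b : a <= b ->
  {within `[a, b], continuous f} -> 0 < f a ->
  (forall x, x \in `]a, b[ -> is_derive x 1 f (D x)) ->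
  (forall x, x \in `]a, b[ -> 2 * Num.sqrt (f x) <= D x) ->
  Num.sqrt (f a) + (b - a) <= Num.sqrt (f b).
Proof.
move=> + cf fa_gt0 fD Dge; rewrite le_eqVlt => /predU1P[<-|ab].
  by rewrite subrr addr0.
have f_ge_fa : {in `[a, b], forall x, f a <= f x}.
  have fder y : y \in `]a, b[ -> derivable f y 1 by move=> /fD [].
  have f'_ge0 y : y \in `]a, b[ -> 0 <= (f^`())%classic y.
    move=> yab; rewrite derive1E (@derive_val _ _ _ _ _ _ _ (fD y yab)).
    by apply: le_trans (Dge y yab); rewrite mulr_ge0 ?sqrtr_ge0.
  move=> x xab; apply: (ger0_derive1_le_cc fder f'_ge0 cf) => //.
    by rewrite in_itv /= lexx ltW.
  by rewrite (itvP xab).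
have f_gt0 x : x \in `]a, b[ -> 0 < f x + 0.
  move=> xab; rewrite addr0 (lt_le_trans fa_gt0) // f_ge_fa //.
  by rewrite in_itv /= !ltW ?(itvP xab).
have [x xab] := MVT ab
  (fun x xab => is_derive_sqrtD (fD x xab) (f_gt0 x xab)) (continuous_sqrtD 0 cf).
rewrite !addr0 => MVTx.
have slope_ge1 : 1 <= D x / (2 * Num.sqrt (f x)).
  have fx_gt0 := f_gt0 x xab; rewrite addr0 in fx_gt0.
  by rewrite ler_pdivlMr ?mul1r ?mulr_gt0 ?sqrtr_gt0 // Dge.
have : b - a <= Num.sqrt (f b) - Num.sqrt (f a).
  by rewrite MVTx ler_pMl ?subr_gt0.
lra.
Qed.

Lemma sqrt_eq_of_derive_eq f a b : a <= b ->
  {within `[a, b], continuous f} -> {in `[a, b], forall x, 0 <= f x} -> 0 < f a ->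
  (forall x, x \in `]a, b[ -> is_derive x 1 f (2 * Num.sqrt (f x))) ->
  Num.sqrt (f b) = Num.sqrt (f a) + (b - a).
Proof.
move=> ab cf f_ge0 fa_gt0 fD; set D := fun x => 2 * Num.sqrt (f x).
apply/le_anti/andP; split.
  by apply: (@sqrt_le_of_derive_le f D _ _ ab cf f_ge0 fD) => x _.
by apply: (@sqrt_ge_of_derive_ge f D _ _ ab cf fa_gt0 fD) => x _.
Qed.

Lemma sqrt_affine_of_derive f T : {within `[0, +oo[, continuous f} ->
  (forall x, 0 <= x -> 0 <= f x) -> 0 < f 0 ->
  (forall x, 0 < x < T -> is_derive x 1 f (2 * Num.sqrt (f x))) ->
  forall t, 0 <= t <= T -> Num.sqrt (f t) = Num.sqrt (f 0) + t.
Proof.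
move=> cf f_ge0 f0_gt0 fD t /andP[t0 tT]; rewrite -[in RHS](subr0 t).
apply: sqrt_eq_of_derive_eq => //.
- by apply: continuous_subspaceW cf; apply: subset_itvl; rewrite bnd_simp.
- by move=> x x0t; rewrite f_ge0 // (itvP x0t).
- by move=> x x0t; apply: fD; rewrite (itvP x0t) (lt_le_trans _ tT) // (itvP x0t).
Qed.

End SqrtComparison.

Lemma inf_superlevel_mem (R : realType) (P : R -> R) (a y : R) :
  {within `[a, +oo[, continuous P} -> [set t | a <= t /\ y <= P t] !=set0 ->
  [set t | a <= t /\ y <= P t] (inf [set t | a <= t /\ y <= P t]).
Proof.
set S := [set t | _ /\ _] => cP S0.
have lbS : has_lbound S by exists a => x [].
have a_le_inf : a <= inf S by apply: lb_le_inf => // x [].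
split => //; rewrite leNgt; apply/negP => Pinf_lt.
have inf_itv : inf S \in `[a, +oo[ by rewrite in_itv /= a_le_inf.
move/subspace_continuousP: cP => /(_ _ inf_itv) /cvgr_lt /(_ _ Pinf_lt).
rewrite near_withinE => /nbhs_ballP[e /= e_gt0 P_lt].
have [x [ax yPx] x_lt] := inf_adherent e_gt0 (conj S0 lbS).
have x_ge : inf S <= x by apply: ge_inf.
have /P_lt : ball (inf S) e x by rewrite /ball /= distrC ger0_norm ?subr_ge0; lra.
by rewrite in_itv /= ax => /(_ isT); rewrite /from_subspace; lra.
Qed.

Lemma inf_le_of_hit (R : realType) (S : set R) (a t : R) :
  S `<=` [set x | a <= x] -> ((forall s, a <= s < t -> ~ S s) -> S t) ->
  S !=set0 /\ inf S <= t.
Proof.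
move=> S_ge hit; have lbS : has_lbound S by exists a => x /S_ge.
have [[s [/andP[_ st] Ss]]|no_hit] := pselect (exists s, a <= s < t /\ S s).
  by split; [exists s | exact/(le_trans (ge_inf lbS Ss))/ltW].
have St : S t by apply: hit => s st Ss; apply: no_hit; exists s.
by split; [exists t | exact: ge_inf].
Qed.

Section ReducedFlow.
Context {R : realType} {lam : R} {d : nat} {a b c : R -> R} {mu : R}.
Hypotheses (d_ge2 : (2 <= d)%N) (lam_gt0 : 0 < lam) (mu_gt0 : 0 < mu).
Hypothesis traj : sgf_trajectory lam d a b c mu.

Definition threshold t := rr lam d a b c t + 2 * (1 + lam) * b t.

Definition before_threshold T := forall s, 0 <= s < T -> ~ T1set lam d a b c s.

Lemma g_w_lt0 [t] : 0 <= a t -> 0 <= b t -> 0 <= c t -> threshold t < 1 ->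
  g_w lam d a b c t < 0.
Proof.
rewrite /threshold /g_w /rr => a_ge0 b_ge0 c_ge0.
have : 0 <= (1 + lam) * b t by rewrite mulr_ge0 // addr_ge0 // ltW.
have : 0 <= (d%:R - 2) * c t.
  by rewrite mulr_ge0 // subr_ge0 (ler_nat _ 2).
lra.
Qed.

Lemma g_v_lt0 [t] : threshold t < 1 -> g_v lam d a b c t < 0.
Proof.
by rewrite /threshold /g_v => lt1; rewrite pmulr_rlt0; have := lam_gt0; lra.
Qed.

Lemma g_perp_lt0 [t] : 0 <= b t -> c t <= b t -> threshold t < 1 ->
  g_perp lam d a b c t < 0.
Proof.
rewrite /threshold /g_perp /rr => b_ge0 cb.
have : 0 <= lam * b t by rewrite mulr_ge0 // ltW.
lra.
Qed.

Lemma threshold_lt1 [T x] : before_threshold T -> 0 <= x < T -> threshold x < 1.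
Proof.
move=> bT /andP[x0 xT]; rewrite ltNge; apply/negP => P1.
by apply: (bT x) => //; rewrite x0.
Qed.

Lemma flow_before_threshold [T x] : before_threshold T -> 0 < x < T ->
  [/\ is_derive x 1 a (2 * Num.sqrt (a x)), is_derive x 1 b (2 * Num.sqrt (b x))
    & is_derive x 1 c (- 2 * Num.sg (g_perp lam d a b c x) * Num.sqrt (c x))].
Proof.
move=> bT /andP[x0 xT]; have [abc_ge0 [_ [_ [_ [_ [_ [_ flow]]]]]]] := traj.
have [a_ge0 [b_ge0 c_ge0]] := abc_ge0 x (ltW x0).
have lt1 : threshold x < 1 by apply: threshold_lt1 bT _; rewrite ltW.
have before_x s : 0 <= s <= x -> ~ T1set lam d a b c s.
  by case/andP=> s0 sx; apply: bT; rewrite s0 (le_lt_trans sx xT).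
have [da [db dc]] := flow x x0 before_x.
rewrite (ltr0_sg (g_w_lt0 a_ge0 b_ge0 c_ge0 lt1)) mulrN1 opprK in da.
by rewrite (ltr0_sg (g_v_lt0 lt1)) mulrN1 opprK in db.
Qed.

Lemma sqrt_ab_before_threshold [T t] : before_threshold T -> 0 <= t <= T ->
  Num.sqrt (a t) = Num.sqrt mu + t /\ Num.sqrt (b t) = Num.sqrt mu + t.
Proof.
move=> bT tT; have [abc_ge0 [a0 [b0 [_ [ca [cb _]]]]]] := traj.
split; [rewrite -a0 | rewrite -b0]; apply: (@sqrt_affine_of_derive _ _ T) => //;
  rewrite ?a0 ?b0 // => x.
- by move=> /abc_ge0 [].
- by case/(flow_before_threshold bT).
- by move=> /abc_ge0 [_ []].
- by case/(flow_before_threshold bT).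
Qed.

Lemma c_le_b_before_threshold [T t] : before_threshold T -> 0 <= t <= T -> c t <= b t.
Proof.
move=> bT /[dup] tT /andP[t0 t_le_T]; have [abc_ge0 [_ [_ [c0 [_ [_ [cc _]]]]]]] := traj.
pose D x := - 2 * Num.sg (g_perp lam d a b c x) * Num.sqrt (c x).
have D_le x : x \in `]0, t[ -> D x <= 2 * Num.sqrt (c x).
  by move=> _; rewrite /D; have := sqrtr_ge0 (c x); case: sgrP => _; lra.
have := @sqrt_le_of_derive_le _ c D 0 t t0 _ _ _ D_le.
rewrite c0 subr0 -(sqrt_ab_before_threshold bT tT).2 ler_sqrt; last first.
  by have [_ []] := abc_ge0 t t0.
apply.
- by apply: continuous_subspaceW cc; apply: subset_itvl; rewrite bnd_simp.
- by move=> x x0t; have /abc_ge0 [_ []] : 0 <= x by rewrite (itvP x0t).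
- move=> x x0t; have [] // := @flow_before_threshold T x bT.
  by rewrite (itvP x0t) (lt_le_trans _ t_le_T) // (itvP x0t).
Qed.

Lemma sqrt_traj_before_threshold [T t] : before_threshold T -> 0 <= t <= T ->
  [/\ Num.sqrt (a t) = Num.sqrt mu + t,
    Num.sqrt (b t) = Num.sqrt mu + t & Num.sqrt (c t) = Num.sqrt mu + t].
Proof.
move=> bT tT; have [sqrt_a sqrt_b] := sqrt_ab_before_threshold bT tT.
split=> //; have [abc_ge0 [_ [_ [c0 [_ [_ [cc _]]]]]]] := traj.
rewrite -c0; apply: (@sqrt_affine_of_derive _ _ T) => //; rewrite ?c0 // => x.
  by move=> /abc_ge0 [_ []].
move=> /[dup] xT /andP[/ltW x0 x_lt_T]; have [_ _] := flow_before_threshold bT xT.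
have [_ [b_ge0 _]] := abc_ge0 x x0.
have lt1 : threshold x < 1 by apply: threshold_lt1 bT _; rewrite x0.
have cx_le_bx : c x <= b x by rewrite (c_le_b_before_threshold bT) // x0 ltW.
by rewrite (ltr0_sg (g_perp_lt0 b_ge0 cx_le_bx lt1)) mulrN1 opprK.
Qed.

Lemma sqr_traj_before_threshold [T t] : before_threshold T -> 0 <= t <= T ->
  [/\ a t = (Num.sqrt mu + t) ^+ 2, b t = (Num.sqrt mu + t) ^+ 2
    & c t = (Num.sqrt mu + t) ^+ 2].
Proof.
move=> bT /[dup] tT /andP[t0 _]; have [abc_ge0 _] := traj.
have [a_ge0 [b_ge0 c_ge0]] := abc_ge0 t t0.
have [ea eb ec] := sqrt_traj_before_threshold bT tT.
by split; [rewrite -ea | rewrite -eb | rewrite -ec]; rewrite sqr_sqrtr.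
Qed.

Lemma threshold_eq_before_threshold [T t] : before_threshold T -> 0 <= t <= T ->
  threshold t = (d%:R + 3 * lam + 2) * (Num.sqrt mu + t) ^+ 2.
Proof.
move=> bT /(sqr_traj_before_threshold bT) [ea eb ec].
by rewrite /threshold /rr ea eb ec; ring.
Qed.

Lemma continuous_threshold : {within `[0, +oo[, continuous threshold}.
Proof.
have [_ [_ [_ [_ [ca [cb [cc _]]]]]]] := traj.
move=> x; rewrite /threshold /rr.
apply: cvgD; last by apply: cvgM; [exact: cvg_cst | exact: cb].
apply: cvgD; last by apply: cvgM; [exact: cvg_cst | exact: cc].
by apply: cvgD; [exact: ca | apply: cvgM; [exact: cvg_cst | exact: cb]].
Qed.

Local Notation T1 := (inf (T1set lam d a b c)).

Lemma before_threshold_T1 : before_threshold T1.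
Proof.
move=> s /andP[_ s_lt_T1] Ss.
have lbS : has_lbound (T1set lam d a b c) by exists 0 => x [].
by move: (ge_inf lbS Ss); rewrite leNgt s_lt_T1.
Qed.

Lemma T1set_neq0_T1_le t : 0 <= t -> 1 <= (d%:R + 3 * lam + 2) * (Num.sqrt mu + t) ^+ 2 ->
  T1set lam d a b c !=set0 /\ T1 <= t.
Proof.
move=> t0 hit; apply: (@inf_le_of_hit _ _ 0) => [x [] // | bt]; split => //.
by rewrite -/(threshold t) (threshold_eq_before_threshold bt) // t0 lexx.
Qed.

Lemma T1_reached : T1set lam d a b c !=set0 ->
  1 <= (d%:R + 3 * lam + 2) * (Num.sqrt mu + T1) ^+ 2.
Proof.
move=> S0.
have [T1_ge0 T1_hit] := @inf_superlevel_mem _ threshold 0 1 continuous_threshold S0.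
by rewrite -(threshold_eq_before_threshold before_threshold_T1) // T1_ge0 lexx.
Qed.

Lemma T1_bounds : mu * (d%:R + lam) < 1 / 16 ->
  T1set lam d a b c !=set0 /\
  1 / 4 / Num.sqrt (d%:R + lam) <= T1 <= 1 / Num.sqrt (d%:R + lam).
Proof.
move=> mu_small; have d_ge1 : 1 <= d%:R :> R by rewrite (ler_nat _ 1) ltnW.
have D_gt0 : 0 < d%:R + lam by have := lam_gt0; lra.
set u := Num.sqrt (d%:R + lam); set m := Num.sqrt mu.
have u_gt0 : 0 < u by rewrite sqrtr_gt0.
have uu : u ^+ 2 = d%:R + lam by rewrite sqr_sqrtr // ltW.
have m_ge0 : 0 <= m by rewrite sqrtr_ge0.
have mm : m ^+ 2 = mu by rewrite sqr_sqrtr // ltW.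
have D_le : d%:R + lam <= d%:R + 3 * lam + 2 by have := lam_gt0; lra.
have [S0 T1_le] : T1set lam d a b c !=set0 /\ T1 <= u^-1.
  apply: T1set_neq0_T1_le; first by rewrite invr_ge0 ltW.
  have uu_inv : u ^+ 2 * u^-1 ^+ 2 = 1 by rewrite -exprMn mulfV ?gt_eqF // expr1n.
  have ui_ge0 : 0 <= u^-1 by rewrite invr_ge0 ltW.
  rewrite -[X in X <= _]uu_inv; apply: ler_pM; rewrite ?sqr_ge0 ?uu //.
  by rewrite ler_sqr ?nnegrE ?addr_ge0 // lerDr.
split=> //; rewrite !div1r T1_le andbT ler_pdivrMr //.
have T1_ge0 : 0 <= T1 by rewrite lb_le_inf // => x [].
have mu_lt : m * u < 1 / 4.
  have : (m * u) ^+ 2 < 1 / 16 by rewrite exprMn mm uu.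
  have : 0 <= m * u by rewrite mulr_ge0 // ltW.
  nra.
have reach_ge : 1 / 2 <= u * (m + T1).
  have D_le3 : d%:R + 3 * lam + 2 <= 3 * u ^+ 2 by rewrite uu; have := lam_gt0; lra.
  have : 1 <= 3 * (u * (m + T1)) ^+ 2.
    rewrite exprMn mulrA; apply: le_trans (T1_reached S0) _.
    by rewrite ler_wpM2r ?sqr_ge0.
  have : 0 <= u * (m + T1) by rewrite mulr_ge0 ?addr_ge0 // ltW.
  nra.
lra.
Qed.

End ReducedFlow.

Theorem lemmaC1 (R : realType) (rho0 : nat -> R) :
  (forall n, 0 < rho0 n) -> rho0 @ \oo --> (0 : R) ->
  exists (d0 : nat) (k1 k2 : R), 0 < k1 /\ 0 < k2 /\
  forall (d : nat) (lam : R) (a b c : R -> R),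
    (3 <= d)%N -> (d0 <= d)%N -> 0 < lam ->
    let mu := rho0 d / (d%:R + lam) in
    sgf_trajectory lam d a b c mu ->
    let T1 := inf (T1set lam d a b c) in
    T1set lam d a b c !=set0 /\
    (forall t, 0 <= t <= T1 ->
       Num.sqrt (a t) = Num.sqrt mu + t /\
       Num.sqrt (b t) = Num.sqrt mu + t /\
       Num.sqrt (c t) = Num.sqrt mu + t /\
       a t = (Num.sqrt mu + t) ^+ 2 /\
       b t = (Num.sqrt mu + t) ^+ 2 /\
       c t = (Num.sqrt mu + t) ^+ 2) /\
    k1 / Num.sqrt (d%:R + lam) <= T1 <= k2 / Num.sqrt (d%:R + lam).
Proof.
move=> rho_gt0 rho_cvg.
have sixteenth_gt0 : 0 < 1 / 16 :> R by rewrite divr_gt0.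
have [N _ rho_small] := cvgr_lt 0 rho_cvg _ sixteenth_gt0.
exists N, (1 / 4), 1; do 2 (split; first by rewrite ?divr_gt0).
move=> d lam a b c d_ge3 d_ge_N lam_gt0 mu traj T1.
have d_ge2 : (2 <= d)%N by exact: ltnW.
have D_gt0 : 0 < d%:R + lam by rewrite ltr_wpDl.
have mu_gt0 : 0 < mu by rewrite divr_gt0.
have mu_small : mu * (d%:R + lam) < 1 / 16 by rewrite divfK ?gt_eqF ?rho_small.
have [S0 T1_bds] := T1_bounds d_ge2 lam_gt0 mu_gt0 traj mu_small.
split=> //; split=> // t tT.
have [sa sb sc] :=
  sqrt_traj_before_threshold d_ge2 lam_gt0 mu_gt0 traj before_threshold_T1 tT.
have [a2 b2 c2] :=
  sqr_traj_before_threshold d_ge2 lam_gt0 mu_gt0 traj before_threshold_T1 tT.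
by do !split.
Qed.
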